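(* Let $\varphi\in\mathrm{End}_K(P_n)$. Then the following are equivalent: (1) $\varphi\in\mathbb{S}_n$; (2) $[x_i,\varphi]\in\mathfrak{p}_i$ for all $i=1,\dots,n$; (3) for each $i=1,\dots,n$ there exist $a_i,b_i\in\mathfrak{p}_i$ with $x_i\varphi=\varphi(x_i+a_i)+b_i$.
   Context: $K$ is a field of characteristic zero. $\mathbb{S}_n$ is the $K$-algebra generated by $x_1,\dots,x_n,y_1,\dots,y_n$ with defining relations $y_ix_i=1$ and $[x_i,y_j]=[x_i,x_j]=[y_i,y_j]=0$ for $i\ne j$. $\mathbb{S}_n$ acts faithfully on $P_n=K[x_1,\dots,x_n]$ by $x_i*x^\alpha=x^{\alpha+e_i}$, $y_i*x^\alpha=x^{\alpha-e_i}$ if $\alpha_i>0$ and $0$ otherwise; thus $\mathbb{S}_n\subset\mathrm{End}_K(P_n)$ and all products/commutators are taken in $\mathrm{End}_K(P_n)$. For $k,l\in\mathbb{N}$, $E_{kl}(i):=x_i^ky_i^l-x_i^{k+1}y_i^{l+1}$, $F(i)=\bigoplus_{k,l}KE_{kl}(i)$, and $\mathfrak{p}_i:=F(i)\otimes\bigotimes_{j\ne i}\mathbb{S}_1(j)\subset\mathbb{S}_n=\bigotimes_j\mathbb{S}_1(j)$ (the ideal generated by $1-x_iy_i$). *)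

From HB Require Import structures.
From mathcomp Require Import all_boot all_order all_algebra.
Set Implicit Arguments. Unset Strict Implicit. Unset Printing Implicit Defensive.
Import GRing.Theory.
Local Open Scope ring_scope.

Section Jacobson.
Variables (K : fieldType) (n : nat).

(* multi-indices alpha in N^n (variables indexed by 'I_n, i.e. x_1..x_n ~ 0..n-1) *)
Definition mind := {ffun 'I_n -> nat}.
Definition incr (i : 'I_n) (a : mind) : mind := [ffun j => a j + (j == i)]%N.
Definition decr (i : 'I_n) (a : mind) : mind := [ffun j => a j - (j == i)]%N.

(* polynomial = finitely supported coefficient function alpha |-> coeff of x^alpha *)
Definition finsupp (f : mind -> K) : Prop :=
  exists s : seq mind, forall a, f a != 0 -> a \in s.

Definition Pn := { f : mind -> K | finsupp f }.
Definition coef (p : Pn) : mind -> K := proj1_sig p.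

Lemma zero_fs : finsupp (fun _ => 0).
Proof. by exists [::] => a; rewrite eqxx. Qed.
Definition Pzero : Pn := exist _ _ zero_fs.

Lemma add_fs (p q : Pn) : finsupp (fun a => coef p a + coef q a).
Proof.
case: p q => [f [s Hs]] [g [t Ht]]; rewrite /finsupp /coef /=; exists (s ++ t) => a Ha.
rewrite mem_cat; case: (boolP (f a == 0)) => [/eqP fa0|/Hs -> //].
by rewrite Ht ?orbT //; move: Ha; rewrite fa0 add0r.
Qed.
Definition Padd (p q : Pn) : Pn := exist _ _ (add_fs p q).

Lemma scale_fs (c : K) (p : Pn) : finsupp (fun a => c * coef p a).
Proof.
case: p => [f [s Hs]]; rewrite /finsupp /coef /=; exists s => a Ha; apply: Hs.
by apply: contraNneq Ha => ->; rewrite mulr0.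
Qed.
Definition Pscale (c : K) (p : Pn) : Pn := exist _ _ (scale_fs c p).

Lemma incr_decr (i : 'I_n) (a : mind) : (0 < a i)%N -> incr i (decr i a) = a.
Proof.
move=> Ha; apply/ffunP => j; rewrite !ffunE.
by case: eqP => [->|_]; rewrite ?subnK ?subn0 ?addn0.
Qed.
Lemma decr_incr (i : 'I_n) (a : mind) : decr i (incr i a) = a.
Proof. by apply/ffunP => j; rewrite !ffunE addnK. Qed.

(* x_i * x^alpha = x^(alpha + e_i) *)
Definition xcoef (i : 'I_n) (p : Pn) (a : mind) : K :=
  if (0 < a i)%N then coef p (decr i a) else 0.
Lemma x_fs (i : 'I_n) (p : Pn) : finsupp (xcoef i p).
Proof.
case: p => [f [s Hs]]; rewrite /finsupp /coef /=; exists (map (incr i) s) => a; rewrite /xcoef /=.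
case: ifP => [Hai Hf|]; last by rewrite eqxx.
by rewrite -(incr_decr Hai); apply: map_f; apply: Hs.
Qed.
Definition opx (i : 'I_n) (p : Pn) : Pn := exist _ _ (x_fs i p).

(* y_i * x^alpha = x^(alpha - e_i) if alpha_i > 0, and 0 otherwise *)
Lemma y_fs (i : 'I_n) (p : Pn) : finsupp (fun a => coef p (incr i a)).
Proof.
case: p => [f [s Hs]]; rewrite /finsupp /coef /=; exists (map (decr i) s) => a /= Hf.
by rewrite -(decr_incr i a); apply: map_f; apply: Hs.
Qed.
Definition opy (i : 'I_n) (p : Pn) : Pn := exist _ _ (y_fs i p).

Definition Op := Pn -> Pn.
Definition linear_op (phi : Op) : Prop :=
  forall (c : K) (p q : Pn), phi (Padd (Pscale c p) q) = Padd (Pscale c (phi p)) (phi q).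
Definition op_id : Op := fun p => p.
Definition op_add (u v : Op) : Op := fun p => Padd (u p) (v p).
Definition op_scale (c : K) (u : Op) : Op := fun p => Pscale c (u p).
Definition op_sub (u v : Op) : Op := op_add u (op_scale (-1) v).
Definition op_mul (u v : Op) : Op := fun p => u (v p).
Definition op_comm (u v : Op) : Op := op_sub (op_mul u v) (op_mul v u).

(* S_n = the K-subalgebra of End_K(P_n) generated by the x_i, y_i
   (the image of the faithful action of the Jacobson algebra) *)
Inductive inS : Op -> Prop :=
| inS_x i : inS (opx i)
| inS_y i : inS (opy i)
| inS_1 : inS op_id
| inS_add u v : inS u -> inS v -> inS (op_add u v)
| inS_scale c u : inS u -> inS (op_scale c u)
| inS_mul u v : inS u -> inS v -> inS (op_mul u v).

Inductive inP (i : 'I_n) : Op -> Prop :=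
| inP_gen : inP i (op_sub op_id (op_mul (opx i) (opy i)))
| inP_add u v : inP i u -> inP i v -> inP i (op_add u v)
| inP_scale c u : inP i u -> inP i (op_scale c u)
| inP_lmul u v : inS u -> inP i v -> inP i (op_mul u v)
| inP_rmul u v : inP i u -> inS v -> inP i (op_mul u v).

End Jacobson.

From HB Require Import structures.
From mathcomp Require Import all_boot all_order all_algebra.
From mathcomp Require Import ring zify.
From Stdlib Require Import FunctionalExtensionality ProofIrrelevance.
Set Implicit Arguments. Unset Strict Implicit. Unset Printing Implicit Defensive.
Import GRing.Theory.
Local Open Scope ring_scope.

(* We prove (1) => (2) => (3) => (1).
   (1) => (2): phi |-> [x_i, phi] is a derivation of End_K(P_n); it sends the
   generators x_j, y_j (j <> i) and 1 to 0 and y_i to x_i y_i - 1, so it maps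
   S_n into the ideal p_i = (1 - x_i y_i).
   (2) => (3): take a_i = 0 and b_i = [x_i, phi].
   (3) => (1): every element of p_i kills the polynomials all of whose
   monomials have large x_i-degree, so (3) says that phi commutes with x_i on
   the monomials x^g with g_i >= N, for some N and every i.  Such a phi is
   determined by the finitely many polynomials phi(x^nu), nu in {0..N}^n:
   phi(x^g) = x^(g - nu) phi(x^nu) with nu = min(g, N).  This formula is
   realised by a finite sum of operators (multiplication by phi(x^nu)) o
   (truncation at nu), built from x_j, y_j and the projections 1 - x_j y_j,
   hence phi lies in S_n.
   The argument does not use the characteristic of K. *)

Section Jacobson.
Variables (K : fieldType) (n : nat).
Implicit Types (p q : Pn K n) (u v w : Op K n) (a b d g nu : mind n).

Lemma Pn_ext p q : coef p =1 coef q -> p = q.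
Proof.
case: p q => f Hf [g Hg] /= fg.
have E : f = g by apply: functional_extensionality.
by subst; f_equal; apply: proof_irrelevance.
Qed.

Lemma op_ext u v : (forall p, u p = v p) -> u = v.
Proof. exact: functional_extensionality. Qed.

Lemma coefD p q a : coef (Padd p q) a = coef p a + coef q a. Proof. by []. Qed.
Lemma coefZ c p a : coef (Pscale c p) a = c * coef p a. Proof. by []. Qed.
Lemma coefX i p a : coef (opx i p) a = if (0 < a i)%N then coef p (decr i a) else 0.
Proof. by []. Qed.
Lemma coefY i p a : coef (opy i p) a = coef p (incr i a). Proof. by []. Qed.
Lemma coef0 a : coef (Pzero K n) a = 0. Proof. by []. Qed.
Definition coefE := (coefD, coefZ, coefX, coefY, coef0).

Lemma opE :
  (forall u v p, op_add u v p = Padd (u p) (v p)) *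
  (forall c u p, op_scale c u p = Pscale c (u p)) *
  (forall u v p, op_mul u v p = u (v p)) *
  (forall u v p, op_comm u v p = Padd (u (v p)) (Pscale (-1) (v (u p)))) *
  (forall p, @op_id K n p = p).
Proof. by []. Qed.

Lemma Padd0 p : Padd p (Pzero K n) = p.
Proof. by apply: Pn_ext => a; rewrite coefD coef0 addr0. Qed.

Lemma mon_fs a : finsupp (fun b => if b == a then (1 : K) else 0).
Proof. by exists [:: a] => b; rewrite inE; case: (b == a); rewrite ?eqxx. Qed.
Definition mon a : Pn K n := exist _ _ (mon_fs a).
Lemma coef_mon a b : coef (mon a) b = if b == a then 1 else 0. Proof. by []. Qed.

Lemma Pn_ind (P : Pn K n -> Prop) : P (Pzero K n) ->
  (forall c a p, P p -> P (Padd (Pscale c (mon a)) p)) -> forall p, P p.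
Proof.
move=> P0 PS p; case: (proj2_sig p) => s; rewrite -/(coef p).
elim: s p => [|a0 s IH] p supp_p.
  suff -> : p = Pzero K n by [].
  by apply: Pn_ext => a; apply/eqP; apply: contraT => /supp_p.
pose f b := if b == a0 then 0 else coef p b.
have supp_f : forall b, f b != 0 -> b \in s.
  rewrite /f => b; case: (b =P a0) => [_|Nb]; first by rewrite eqxx.
  by move/supp_p; rewrite inE; case: (b =P a0).
have -> : p = Padd (Pscale (coef p a0) (mon a0)) (exist _ f (ex_intro _ s supp_f)).
  apply: Pn_ext => a; rewrite coefD coefZ coef_mon /coef /= /f -/(coef p).
  by case: eqP => [->|_]; rewrite ?mulr1 ?addr0 ?mulr0 ?add0r.
exact/PS/IH.
Qed.

Lemma lin0 u : linear_op u -> u (Pzero K n) = Pzero K n.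
Proof.
move=> Lu; have := Lu (-1) (Pzero K n) (Pzero K n).
have -> : Padd (Pscale (-1) (Pzero K n)) (Pzero K n) = Pzero K n.
  by apply: Pn_ext => a; rewrite !coefE mulr0 addr0.
by move=> E; apply: Pn_ext => a; rewrite E coefD coefZ mulN1r addNr.
Qed.

Lemma linD u p q : linear_op u -> u (Padd p q) = Padd (u p) (u q).
Proof.
move=> Lu; have := Lu 1 p q.
have -> : Padd (Pscale 1 p) q = Padd p q by apply: Pn_ext => a; rewrite !coefE mul1r.
by move=> ->; apply: Pn_ext => a; rewrite !coefE mul1r.
Qed.

Lemma linZ u c p : linear_op u -> u (Pscale c p) = Pscale c (u p).
Proof.
move=> Lu; have := Lu c p (Pzero K n); rewrite !Padd0 => ->.
by rewrite lin0 // Padd0.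
Qed.

Lemma linear_op_ext u v : linear_op u -> linear_op v ->
  (forall a, u (mon a) = v (mon a)) -> u = v.
Proof.
move=> Lu Lv uv; apply: op_ext; apply: Pn_ind => [|c a p IH]; first by rewrite !lin0.
by rewrite !linD // !linZ // uv IH.
Qed.

Lemma inS_linear u : inS u -> linear_op u.
Proof.
elim=> {u} [i|i||u v _ Lu _ Lv|e u _ Lu|u v _ Lu _ Lv] c p q; apply: Pn_ext => a.
- by rewrite !coefE; case: ifP; rewrite ?mulr0 ?addr0.
- by rewrite !coefE.
- by [].
- by rewrite !opE Lu Lv !coefE; ring.
- by rewrite !opE Lu !coefE; ring.
- by rewrite !opE Lv Lu.
Qed.

Lemma incrE i a j : incr i a j = (a j + (j == i))%N. Proof. by rewrite ffunE. Qed.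
Lemma decrE i a j : decr i a j = (a j - (j == i))%N. Proof. by rewrite ffunE. Qed.

Lemma incr_neq i j a : i != j -> incr i a j = a j.
Proof. by move=> Nij; rewrite incrE eq_sym (negbTE Nij) addn0. Qed.
Lemma decr_neq i j a : i != j -> decr i a j = a j.
Proof. by move=> Nij; rewrite decrE eq_sym (negbTE Nij) subn0. Qed.

Lemma decrC i j a : decr i (decr j a) = decr j (decr i a).
Proof. by apply/ffunP => k; rewrite !decrE subnAC. Qed.

Lemma decr_incrC i j a : i != j -> decr i (incr j a) = incr j (decr i a).
Proof.
move=> Nij; apply/ffunP => k; rewrite !decrE !incrE decrE.
case: (eqVneq k i) => [->|_]; last by rewrite !subn0.
by rewrite (negbTE Nij) !addn0.
Qed.

Lemma opxC i j p : opx i (opx j p) = opx j (opx i p).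
Proof.
case: (eqVneq i j) => [-> //|Nij]; have Nji : j != i by rewrite eq_sym.
apply: Pn_ext => a; rewrite !coefX (decr_neq _ Nij) (decr_neq _ Nji) decrC.
by case: ifP; case: ifP.
Qed.

Lemma opx_opyC i j p : i != j -> opx i (opy j p) = opy j (opx i p).
Proof.
move=> Nij; apply: Pn_ext => a; rewrite !coefE incr_neq 1?eq_sym //.
by rewrite decr_incrC.
Qed.

Lemma opyK i p : opy i (opx i p) = p.
Proof. by apply: Pn_ext => a; rewrite coefY coefX incrE eqxx addn1 /= decr_incr. Qed.

Lemma coef_xy i p a : coef (opx i (opy i p)) a = if a i == 0%N then 0 else coef p a.
Proof.
rewrite coefX coefY lt0n; case: (boolP (a i == 0%N)) => //= Ha.
by rewrite incr_decr // lt0n.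
Qed.

(* The generator 1 - x_i y_i of p_i is the projection onto the monomials free
   of x_i. *)
Definition gen i : Op K n := op_sub (@op_id K n) (op_mul (opx i) (opy i)).

Lemma inS_gen i : inS (gen i).
Proof.
by apply: inS_add; [exact: inS_1 | apply/inS_scale/inS_mul; [exact: inS_x | exact: inS_y]].
Qed.

Lemma coef_gen i p a : coef (gen i p) a = if a i == 0%N then coef p a else 0.
Proof.
rewrite /gen /op_sub !opE coefD coefZ coef_xy.
by case: ifP; rewrite ?mulr0 ?addr0 // mulN1r subrr.
Qed.

Lemma inP_null i u : (forall p, u p = Pzero K n) -> inP i u.
Proof.
move=> u0; have -> : u = op_scale 0 (gen i).
  by apply: op_ext => p; apply: Pn_ext => a; rewrite u0 coefZ coef0 mul0r.
exact/inP_scale/inP_gen.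
Qed.

Lemma comm_null u v : (forall p, u (v p) = v (u p)) -> forall p, op_comm u v p = Pzero K n.
Proof. by move=> uv p; apply: Pn_ext => a; rewrite opE uv !coefE mulN1r subrr. Qed.

Lemma comm_x_y i : op_comm (opx i) (opy i) = op_scale (-1) (gen i).
Proof.
apply: op_ext => p; rewrite !opE opyK; apply: Pn_ext => a.
rewrite coefD !coefZ coef_gen coef_xy.
by case: ifP; rewrite ?mulr0 ?add0r // mulN1r subrr.
Qed.

Section Derivation.
Variables (w : Op K n) (Lw : linear_op w).

Lemma comm_add u v : op_comm w (op_add u v) = op_add (op_comm w u) (op_comm w v).
Proof.
apply: op_ext => p; rewrite !opE (linD _ _ Lw); apply: Pn_ext => a; rewrite !coefE; ring.
Qed.

Lemma comm_scale c u : op_comm w (op_scale c u) = op_scale c (op_comm w u).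
Proof.
apply: op_ext => p; rewrite !opE (linZ _ _ Lw); apply: Pn_ext => a; rewrite !coefE; ring.
Qed.

Lemma comm_mul u v : linear_op u ->
  op_comm w (op_mul u v) = op_add (op_mul (op_comm w u) v) (op_mul u (op_comm w v)).
Proof.
move=> Lu; apply: op_ext => p; rewrite !opE (linD _ _ Lu) (linZ _ _ Lu).
by apply: Pn_ext => a; rewrite !coefE; ring.
Qed.

End Derivation.

Lemma comm_inS i u : inS u -> inP i (op_comm (opx i) u).
Proof.
have Lx := inS_linear (@inS_x K n i).
elim=> {u} [j|j||u v Su Pu Sv Pv|c u Su Pu|u v Su Pu Sv Pv].
- by apply/inP_null/comm_null => p; rewrite opxC.
- case: (eqVneq i j) => [<-|Nij]; first by rewrite comm_x_y; exact/inP_scale/inP_gen.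
  by apply/inP_null/comm_null => p; rewrite opx_opyC.
- exact/inP_null/comm_null.
- by rewrite comm_add //; apply: inP_add.
- by rewrite comm_scale //; apply: inP_scale.
- rewrite comm_mul //; last exact: inS_linear.
  by apply: inP_add; [apply: inP_rmul | apply: inP_lmul].
Qed.

Lemma comm_to_twisted i phi : inP i (op_comm (opx i) phi) ->
  exists a b : Op K n, inP i a /\ inP i b /\
    op_mul (opx i) phi = op_add (op_mul phi (op_add (opx i) a)) b.
Proof.
move=> Pc; exists (fun _ => Pzero K n), (op_comm (opx i) phi).
split; first exact: inP_null; split => //.
apply: op_ext => p; rewrite !opE Padd0; apply: Pn_ext => a; rewrite !coefE; ring.
Qed.

Definition high i N p := forall a, (a i < N)%N -> coef p a = 0.

Lemma high_mono i N M p : (N <= M)%N -> high i M p -> high i N p.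
Proof. by move=> NM hp a Ha; apply: hp; apply: leq_trans NM. Qed.

Lemma high_mon i N g : (N <= g i)%N -> high i N (mon g).
Proof.
move=> Hg a Ha; rewrite coef_mon; case: eqP => // Eag.
by move: Ha; rewrite Eag ltnNge Hg.
Qed.

Lemma inS_high i u : inS u -> exists M, forall N p, high i (N + M) p -> high i N (u p).
Proof.
elim=> {u} [j|j||u v _ [Mu Hu] _ [Mv Hv]|c u _ [Mu Hu]|u v _ [Mu Hu] _ [Mv Hv]].
- exists 0%N => N p; rewrite addn0 => hp a Ha; rewrite coefX.
  by case: ifP => // _; apply: hp; rewrite decrE; exact: leq_ltn_trans (leq_subr _ _) Ha.
- exists 1%N => N p hp a Ha; rewrite coefY; apply: hp.
  by rewrite incrE addn1 ltnS; apply: leq_trans _ Ha; rewrite -addn1 leq_add2l leq_b1.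
- by exists 0%N => N p; rewrite addn0.
- exists (maxn Mu Mv) => N p hp a Ha; rewrite opE coefD (Hu N) ?(Hv N) ?addr0 //;
    by apply: high_mono hp; rewrite leq_add2l ?leq_maxl ?leq_maxr.
- by exists Mu => N p hp a Ha; rewrite opE coefZ (Hu N) ?mulr0.
- by exists (Mu + Mv)%N => N p hp; rewrite opE; apply: Hu; apply: Hv; rewrite -addnA.
Qed.

Lemma inP_kills_high i u : inP i u -> exists N, forall p, high i N p -> u p = Pzero K n.
Proof.
elim=> {u} [|u v _ [Nu Hu] _ [Nv Hv]|c u _ [Nu Hu]|u v Su _ [Nv Hv]|u v _ [Nu Hu] Sv].
- exists 1%N => p hp; apply: Pn_ext => a; rewrite coef_gen coef0.
  by case: eqP => // Ha; apply: hp; rewrite Ha.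
- exists (maxn Nu Nv) => p hp; rewrite opE Hu ?Hv ?Padd0 //;
    by apply: high_mono hp; rewrite ?leq_maxl ?leq_maxr.
- exists Nu => p hp; rewrite opE Hu //.
  by apply: Pn_ext => a; rewrite coefZ coef0 mulr0.
- by exists Nv => p hp; rewrite opE Hv // lin0 //; exact: inS_linear.
- have [M HM] := inS_high i Sv.
  by exists (Nu + M)%N => p hp; rewrite opE; apply/Hu/HM.
Qed.

Lemma twisted_commutes_high i phi :
  (exists a b : Op K n, inP i a /\ inP i b /\
    op_mul (opx i) phi = op_add (op_mul phi (op_add (opx i) a)) b) ->
  exists N, forall g, (N <= g i)%N -> phi (opx i (mon g)) = opx i (phi (mon g)).
Proof.
case=> [a [b [Pa [Pb E]]]].
have [Na Ha] := inP_kills_high Pa; have [Nb Hb] := inP_kills_high Pb.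
exists (maxn Na Nb) => g Hg.
have := congr1 (fun f => f (mon g)) E; rewrite /= !opE.
rewrite Ha ?Hb ?Padd0 //; apply: high_mon; apply: leq_trans Hg;
  by rewrite ?leq_maxl ?leq_maxr.
Qed.

Definition mle a b := [forall j, (a j <= b j)%N].
Definition madd a b : mind n := [ffun j => (a j + b j)%N].
Definition msub a b : mind n := [ffun j => (a j - b j)%N].
Definition mmin a N : mind n := [ffun j => minn (a j) N].
Definition mzero : mind n := [ffun => 0%N].

Lemma mleP a b : reflect (forall j, a j <= b j)%N (mle a b).
Proof. exact: forallP. Qed.

Lemma maddC a b : madd a b = madd b a.
Proof. by apply/ffunP => j; rewrite !ffunE addnC. Qed.

Lemma madd0 a : madd a mzero = a.
Proof. by apply/ffunP => j; rewrite !ffunE addn0. Qed.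

Lemma madd_incr j a b : madd a (incr j b) = incr j (madd a b).
Proof. by apply/ffunP => k; rewrite !ffunE addnA. Qed.

Lemma mle_msubK x a y : (mle x a && (msub a x == y)) = (a == madd y x).
Proof.
apply/andP/eqP => [[/mleP xa /eqP <-]|->].
  by apply/ffunP => j; rewrite !ffunE subnK.
split; first by apply/mleP => j; rewrite ffunE leq_addl.
by apply/eqP/ffunP => j; rewrite !ffunE addnK.
Qed.

Lemma mle_incr j al a : mle (incr j al) a = (0 < a j)%N && mle al (decr j a).
Proof.
apply/mleP/andP => [H|[Haj /mleP H] k].
  split; first by have := H j; rewrite incrE eqxx; lia.
  by apply/mleP => k; have := H k; rewrite decrE incrE; case: (k == j) => /=; lia.
by have := H k; rewrite decrE incrE; case: (eqVneq k j) => [->|] /=; lia.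
Qed.

Lemma msub_incr j al a : msub a (incr j al) = msub (decr j a) al.
Proof. by apply/ffunP => k; rewrite !ffunE -subnDA addnC. Qed.

Lemma mind_ind (P : mind n -> Prop) :
  P mzero -> (forall j a, P a -> P (incr j a)) -> forall a, P a.
Proof.
move=> P0 PS a; move Ew : (\sum_j a j)%N => w; elim: w a Ew => [|w IH] a Ew.
  suff -> : a = mzero by [].
  apply/ffunP => j; rewrite ffunE; apply/eqP.
  by move/eqP: Ew; rewrite sum_nat_eq0 => /forallP /(_ j).
have [j Hj] : exists j, (0 < a j)%N.
  apply/existsP; apply: contraT => /existsPn a0; move: Ew.
  by rewrite big1 // => j _; apply/eqP; rewrite eqn0Ngt a0.
rewrite -(incr_decr Hj); apply/PS/IH; apply: succn_inj; rewrite -Ew.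
rewrite [in RHS](bigD1 j) //= [in LHS](bigD1 j) //= decrE eqxx subn1 -addSn prednK //.
by congr (_ + _)%N; apply: eq_bigr => k Nk; rewrite decrE (negbTE Nk) subn0.
Qed.

(* mulX al p a is the coefficient of x^a in x^al * p. *)
Definition mulX al p a : K := if mle al a then coef p (msub a al) else 0.

Lemma mulX0 p a : mulX mzero p a = coef p a.
Proof.
rewrite /mulX (_ : mle _ _); last by apply/mleP => j; rewrite ffunE.
by congr coef; apply/ffunP => j; rewrite !ffunE subn0.
Qed.

Lemma mulX_incr j al p a :
  mulX (incr j al) p a = if (0 < a j)%N then mulX al p (decr j a) else 0.
Proof. by rewrite /mulX mle_incr msub_incr; case: (0 < a j)%N. Qed.

Lemma mulX_mon a0 d a : mulX a0 (mon d) a = mulX d (mon a0) a.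
Proof.
rewrite /mulX !coef_mon.
have E : (mle a0 a && (msub a a0 == d)) = (mle d a && (msub a d == a0)).
  by rewrite !mle_msubK maddC.
by case: (mle a0 a) E; case: (mle d a) => //= E; rewrite ?E // -E.
Qed.

Lemma mon_incr j g : mon (incr j g) = opx j (mon g).
Proof.
apply: Pn_ext => a; rewrite coefX !coef_mon.
case: (ltnP 0 (a j)) => Ha.
  by rewrite -{1}(incr_decr Ha) (inj_eq (can_inj (@decr_incr _ j))).
case: eqP => // Ea; move: Ha; rewrite Ea incrE eqxx addn1 //.
Qed.

Lemma inS_mulX al : exists u, inS u /\ forall p a, coef (u p) a = mulX al p a.
Proof.
elim/mind_ind: al => [|j al [u [Su Hu]]].
  by exists (@op_id K n); split; [exact: inS_1 | move=> p a; rewrite mulX0].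
exists (op_mul (opx j) u); split; first exact/inS_mul/Su/inS_x.
by move=> p a; rewrite mulX_incr -Hu.
Qed.

Lemma inS_divX be : exists u, inS u /\ forall p a, coef (u p) a = coef p (madd a be).
Proof.
elim/mind_ind: be => [|j be [u [Su Hu]]].
  by exists (@op_id K n); split; [exact: inS_1 | move=> p a; rewrite madd0].
exists (op_mul u (opy j)); split; first exact/inS_mul/inS_y.
by move=> p a; rewrite opE Hu coefY madd_incr.
Qed.

Lemma inS_proj (s : seq 'I_n) : exists u, inS u /\
  forall p a, coef (u p) a = if all (fun j => a j == 0%N) s then coef p a else 0.
Proof.
elim: s => [|j s [u [Su Hu]]]; first by exists (@op_id K n); split; [exact: inS_1|].
exists (op_mul (gen j) u); split; first exact/inS_mul/Su/inS_gen.
by move=> p a; rewrite opE coef_gen Hu /=; case: (a j == 0%N).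
Qed.

Lemma inS_mul_poly q : exists M, inS M /\ forall d a, coef (M (mon d)) a = mulX d q a.
Proof.
elim/Pn_ind: q => [|c a0 q [M [SM HM]]].
  exists (op_scale 0 (@op_id K n)); split; first exact/inS_scale/inS_1.
  by move=> d a; rewrite opE coefZ mul0r /mulX coef0; case: ifP.
have [u [Su Hu]] := inS_mulX a0.
exists (op_add (op_scale c u) M); split; first exact/inS_add/SM/inS_scale.
move=> d a; rewrite !opE coefD coefZ Hu HM mulX_mon /mulX.
by case: (mle d a); rewrite ?coefD ?coefZ ?mulr0 ?add0r.
Qed.

Lemma trunc_nat (N m x y : nat) : (m <= N)%N ->
  ((m < N -> x = 0) /\ x + m = y)%N <-> (minn y N = m /\ x = y - m)%N.
Proof.
move=> mN; split => [[x0 <-]|[<- ->]]; last lia.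
by case: (ltnP m N) => [/x0 ->|Nm]; lia.
Qed.

Lemma inS_trunc N nu : (forall j, nu j <= N)%N -> exists T, inS T /\ forall g,
  T (mon g) = if mmin g N == nu then mon (msub g nu) else Pzero K n.
Proof.
move=> nuN; set s := [seq j <- enum 'I_n | (nu j < N)%N].
have [pr [Spr Hpr]] := inS_proj s; have [Y [SY HY]] := inS_divX nu.
exists (op_mul pr Y); split; first exact: inS_mul.
move=> g; apply: Pn_ext => a; rewrite opE Hpr HY.
suff E : (all (fun j => a j == 0%N) s && (madd a nu == g))
       = ((mmin g N == nu) && (a == msub g nu)).
  by case: (mmin g N == nu) E; case: (all _ s) => /= E; rewrite ?coef_mon ?coef0 ?E // -E.
have Es : forall j, j \in s = (nu j < N)%N by move=> j; rewrite mem_filter mem_enum andbT.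
apply/andP/andP => [[/allP a0 /eqP Eg]|[/eqP Em /eqP Ea]].
  have H j : (minn (g j) N = nu j /\ a j = g j - nu j)%N.
    apply/(trunc_nat _ _ (nuN j)); split; last by rewrite -Eg ffunE.
    by move=> Hj; apply/eqP/a0; rewrite Es.
  by split; apply/eqP/ffunP => j; rewrite ffunE; case: (H j).
have H j : ((nu j < N -> a j = 0) /\ a j + nu j = g j)%N.
  by apply/(trunc_nat _ _ (nuN j)); rewrite Ea -Em !ffunE.
split; first by apply/allP => j; rewrite Es => /(proj1 (H j)) ->.
by apply/eqP/ffunP => j; rewrite ffunE; case: (H j).
Qed.

Section Reconstruction.
Variables (phi : Op K n) (N : nat).
Hypothesis phi_lin : linear_op phi.
Hypothesis phi_comm : forall i g, (N <= g i)%N -> phi (opx i (mon g)) = opx i (phi (mon g)).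

Lemma phi_shift d nu : (forall j, 0 < d j -> N <= nu j)%N ->
  forall a, coef (phi (mon (madd d nu))) a = mulX d (phi (mon nu)) a.
Proof.
elim/mind_ind: d => [|j d IH] high_nu a; first by rewrite maddC madd0 mulX0.
have Hj : (N <= nu j)%N by apply: high_nu; rewrite incrE eqxx addn1.
rewrite maddC madd_incr mon_incr phi_comm; last first.
  by rewrite ffunE; apply: leq_trans Hj (leq_addr _ _).
rewrite coefX mulX_incr maddC; case: ifP => // _; apply: IH => k Hk.
by apply: high_nu; rewrite incrE; apply: leq_trans Hk (leq_addr _ _).
Qed.

Lemma phi_mon g a :
  coef (phi (mon g)) a = mulX (msub g (mmin g N)) (phi (mon (mmin g N))) a.
Proof.
rewrite -phi_shift => [|j]; last first.
  by rewrite !ffunE; lia.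
by congr (coef (phi (mon _)) a); apply/ffunP => j; rewrite !ffunE subnK // geq_minl.
Qed.

Lemma inS_partial (L : seq (mind n)) : (forall nu, nu \in L -> forall j, nu j <= N)%N ->
  exists psi, inS psi /\ forall g,
    psi (mon g) = if mmin g N \in L then phi (mon g) else Pzero K n.
Proof.
elim: L => [|nu L IH] LN.
  exists (op_scale 0 (@op_id K n)); split; first exact/inS_scale/inS_1.
  by move=> g; apply: Pn_ext => a; rewrite opE coefZ coef0 mul0r.
have [psi [Spsi Hpsi]] : exists psi, inS psi /\ forall g,
    psi (mon g) = if mmin g N \in L then phi (mon g) else Pzero K n.
  by apply: IH => m Hm; apply: LN; rewrite in_cons Hm orbT.
have [T [ST HT]] := inS_trunc (LN nu (mem_head _ _)).
have [M [SM HM]] := inS_mul_poly (phi (mon nu)).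
case nuL: (nu \in L).
  by exists psi; split => // g; rewrite Hpsi in_cons; case: eqP => // ->; rewrite nuL.
exists (op_add (op_mul M T) psi); split; first exact/inS_add/Spsi/inS_mul.
move=> g; rewrite !opE HT Hpsi in_cons; case: (eqVneq (mmin g N) nu) => [E|_] /=.
  by rewrite E nuL Padd0; apply: Pn_ext => a; rewrite HM phi_mon E.
by rewrite (lin0 (inS_linear SM)); apply: Pn_ext => a; rewrite coefD coef0 add0r.
Qed.

Definition box : seq (mind n) :=
  [seq [ffun j => nat_of_ord (f j)] | f : {ffun 'I_n -> 'I_N.+1} <- enum {ffun 'I_n -> 'I_N.+1}].

Lemma mmin_in_box g : mmin g N \in box.
Proof.
apply/mapP; exists [ffun j => (inord (minn (g j) N) : 'I_N.+1)]; first by rewrite mem_enum.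
by apply/ffunP => j; rewrite !ffunE inordK // ltnS geq_minr.
Qed.

Lemma box_le nu : nu \in box -> forall j, (nu j <= N)%N.
Proof. by case/mapP => f _ -> j; rewrite ffunE -ltnS ltn_ord. Qed.

Lemma inS_reconstruct : inS phi.
Proof.
have [psi [Spsi Hpsi]] := inS_partial box_le.
suff -> : phi = psi by [].
by apply: linear_op_ext => // [|g]; [exact: inS_linear | rewrite Hpsi mmin_in_box].
Qed.

End Reconstruction.

Lemma twisted_inS phi : linear_op phi ->
  (forall i, exists a b : Op K n, inP i a /\ inP i b /\
    op_mul (opx i) phi = op_add (op_mul phi (op_add (opx i) a)) b) -> inS phi.
Proof.
move=> Lphi tw; have [N HN] := fin_all_exists (fun i => twisted_commutes_high (tw i)).
apply: (@inS_reconstruct phi (\max_i N i)) => // i g Hg.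
by apply: HN; apply: leq_trans (leq_bigmax i) Hg.
Qed.

End Jacobson.

Theorem theorem6p2 (K : fieldType) (n : nat) (charK0 : [pchar K] =i pred0)
    (phi : Op K n) (phi_lin : linear_op phi) :
  (inS phi <-> (forall i : 'I_n, inP i (op_comm (opx i) phi))) /\
  ((forall i : 'I_n, inP i (op_comm (opx i) phi)) <->
   (forall i : 'I_n, exists a b : Op K n, inP i a /\ inP i b /\
      op_mul (opx i) phi = op_add (op_mul phi (op_add (opx i) a)) b)).
Proof.
have one_two : inS phi -> forall i, inP i (op_comm (opx i) phi).
  by move=> Sphi i; exact: comm_inS.
have two_three : (forall i, inP i (op_comm (opx i) phi)) -> forall i, exists a b : Op K n,
    inP i a /\ inP i b /\ op_mul (opx i) phi = op_add (op_mul phi (op_add (opx i) a)) b.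
  by move=> comm_phi i; exact: comm_to_twisted.
have three_one := twisted_inS phi_lin.
split; split.
- exact: one_two.
- by move/two_three/three_one.
- exact: two_three.
- by move/three_one/one_two.
Qed.
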